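(* Let $p\in(0,1)$, let $t$ be a formal indeterminate, and for $n\ge1$ let $X_n$ be the maximum weight of a directed path from $1$ to $n$ in the transitive tournament on $\{1,\ldots,n\}$ with independent $\mathrm{Bernoulli}(p)$ edge weights. Write $\mathbb{E}[Y_n]=\mathbb{E}[t^{X_n}]=\sum_{k\ge0}\Pr[X_n=k]\,t^k$ for the probability generating function. Then for every $n\ge1$, \[ \mathbb{E}[Y_n]=\sum_{i=1}^{n-1} t\left[(1-p)^{\binom{i}{2}}-(1-p)^{\binom{i+1}{2}}\right]\mathbb{E}[Y_{n-i}]+(1-p)^{\binom{n}{2}}. \] Consequently, with $\mathbb{E}[Y_0]:=1$ and $Z(x,t)=\sum_{n\ge0}\mathbb{E}[Y_n]x^n$, we have \[ Z(x,t)=1+\frac{xB_p(x)}{1-t\,[A_p(x)-B_p(x)]}, \] where $A_p(x)=\sum_{n\ge0}(1-p)^{\binom{n}{2}}x^n$ and $B_p(x)=\sum_{n\ge0}(1-p)^{\binom{n+1}{2}}x^n$.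
   Context: The transitive tournament on $\{1,\ldots,n\}$ has a directed edge $(i,j)$ for every $1\le i<j\le n$. The edge weights $w(i,j)\in\{0,1\}$ are independent, and each equals $1$ with probability $p$. The weight of a path is the sum of its edge weights, and $X_n$ is the maximum weight of a directed path from $1$ to $n$; in particular $X_1=0$. Binomial coefficients satisfy $\binom{0}{2}=\binom{1}{2}=0$. The identity for $Z$ is an identity of formal power series in $x$ whose coefficients are polynomials in $t$. *)

From HB Require Import structures.
From mathcomp Require Import all_boot all_order all_algebra.
Set Implicit Arguments. Unset Strict Implicit. Unset Printing Implicit Defensive.
Import Order.TTheory GRing.Theory Num.Theory.
Local Open Scope ring_scope.

(* Vertices of the transitive tournament on n vertices are 0,...,n-1
   (the paper's 1,...,n shifted by one).  Edges are the pairs (i,j), i<j. *)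
Definition edge (n : nat) := {e : 'I_n * 'I_n | (e.1 < e.2)%N}.

Definition weights (n : nat) := {ffun edge n -> bool}.

Definition wt (n : nat) (w : weights n) (a b : nat) : nat :=
  [exists e : edge n, ((val (val e).1, val (val e).2) == (a, b)) && w e].

Definition path_weight (n : nat) (w : weights n) (s : seq nat) : nat :=
  \sum_(e <- zip s (behead s)) wt w e.1 e.2.

(* A directed path in the transitive tournament is determined by its vertex
   set (vertices are visited in increasing order). *)
Definition path_of (n : nat) (S : {set 'I_n}) : seq nat :=
  sort leq [seq val i | i <- enum S].

Definition is_path (n : nat) (S : {set 'I_n}) : bool :=
  (0%N \in path_of S) && (n.-1 \in path_of S).

Definition Xmax (n : nat) (w : weights n) : nat :=
  \max_(S : {set 'I_n} | is_path S) path_weight w (path_of S).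

Definition prob {R : realFieldType} (p : R) (n : nat) (w : weights n) : R :=
  \prod_(e : edge n) (if w e then p else 1 - p).

Definition EY {R : realFieldType} (p : R) (n : nat) : {poly R} :=
  \sum_(w : weights n) (prob p w)%:P * 'X^(Xmax w).

(* Formal power series in x with coefficients in a ring T (here {poly R}). *)
Definition fps (T : Type) := nat -> T.

Definition fps_one {T : nzRingType} : fps T := fun k => if k == 0%N then 1 else 0.
Definition fps_add {T : nzRingType} (f g : fps T) : fps T := fun k => f k + g k.
Definition fps_sub {T : nzRingType} (f g : fps T) : fps T := fun k => f k - g k.
Definition fps_scale {T : nzRingType} (c : T) (f : fps T) : fps T := fun k => c * f k.
Definition fps_xmul {T : nzRingType} (f : fps T) : fps T :=
  fun k => if k is m.+1 then f m else 0.
Definition fps_mul {T : nzRingType} (f g : fps T) : fps T :=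
  fun k => \sum_(i < k.+1) f i * g (k - i)%N.

(* coefficients g_0, ..., g_n of the multiplicative inverse g of f
   (meaningful when f 0 is a unit): g_0 = f_0^-1,
   g_m = - f_0^-1 * sum_{k=1}^m f_k g_{m-k}. *)
Fixpoint inv_coefs {T : unitRingType} (f : fps T) (n : nat) : seq T :=
  match n with
  | 0 => [:: (f 0%N)^-1]
  | m.+1 => let s := inv_coefs f m in
            rcons s (- (f 0%N)^-1 *
                     \sum_(k < m.+1) f k.+1 * nth 0 s (m - k)%N)
  end.

Definition fps_inv {T : unitRingType} (f : fps T) : fps T :=
  fun k => nth 0 (inv_coefs f k) k.

Definition Ap {R : realFieldType} (p : R) : fps {poly R} :=
  fun n => ((1 - p) ^+ 'C(n, 2))%:P.
Definition Bp {R : realFieldType} (p : R) : fps {poly R} :=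
  fun n => ((1 - p) ^+ 'C(n.+1, 2))%:P.
Definition Zser {R : realFieldType} (p : R) : fps {poly R} :=
  fun n => if n == 0%N then 1 else EY p n.

(* Let i be the least vertex that receives an edge of weight 1 from an earlier
   vertex.  All edges before i weigh 0, so a heaviest path may jump straight to i
   and then continue as a heaviest path on the vertices i, ..., n-1: thus
   X_n = 1 + X', where X' is a copy of X_{n-i} built from the edges inside
   {i, ..., n-1}.  The event that i is this least vertex only involves the edges
   inside {0, ..., i}, so it is independent of X', and it has probability
   (1-p)^C(i,2) - (1-p)^C(i+1,2); when there is no such vertex, X_n = 0, with
   probability (1-p)^C(n,2).  Read as an identity of
   power series it says (1 - t (A_p - B_p)) (Z - 1) = x B_p, which is solved by
   the inverse of the constant-term-one series 1 - t (A_p - B_p).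
   Expectations are computed by conditioning on one edge at a time. *)

From HB Require Import structures.
From mathcomp Require Import all_boot all_order all_algebra zify ring.
From Stdlib Require Import FunctionalExtensionality.
Import Order.TTheory GRing.Theory Num.Theory.

Set Implicit Arguments.
Unset Strict Implicit.
Unset Printing Implicit Defensive.

Section LongestPath.

Implicit Types (g : nat * nat -> bool) (m : nat).

Definition shift_pair (i : nat) (e : nat * nat) := (e.1 + i, e.2 + i).

Definition shift (i : nat) g := g \o shift_pair i.

Lemma shiftD i j g : shift i (shift j g) = shift (i + j) g.
Proof.
by apply: functional_extensionality => -[a b]; rewrite /shift /shift_pair /= !addnA.
Qed.

Lemma shift0 g : shift 0 g = g.
Proof.
by apply: functional_extensionality => -[a b]; rewrite /shift /shift_pair /= !addn0.
Qed.

Lemma shift_apply i g a b : shift i g (a, b) = g (a + i, b + i).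
Proof. by []. Qed.

(* [longest m g] is the heaviest weight of an increasing path from 0 to m; fuel [m]
   suffices because every step moves right. *)
Fixpoint longest_fuel (fuel m : nat) g : nat :=
  if fuel is f.+1 then
    \max_(k < m) (g (0, k.+1) + longest_fuel f (m - k.+1) (shift k.+1 g))
  else 0.

Definition longest m g := longest_fuel m m g.

Lemma longest_fuel_enough f1 f2 m g : m <= f1 -> m <= f2 ->
  longest_fuel f1 m g = longest_fuel f2 m g.
Proof.
elim: f1 f2 m g => [|f1 IH] [|f2] m g /=; rewrite ?leqn0.
- by [].
- by move=> /eqP -> _; rewrite big_ord0.
- by move=> _ /eqP ->; rewrite big_ord0.
move=> h1 h2; apply: eq_bigr => k _; congr (_ + _); apply: IH; lia.
Qed.

Lemma longestE m g :
  longest m g = \max_(k < m) (g (0, k.+1) + longest (m - k.+1) (shift k.+1 g)).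
Proof.
case: m => [|m]; first by rewrite /longest /= big_ord0.
by apply: eq_bigr => k _; congr (_ + _); apply: longest_fuel_enough; lia.
Qed.

Lemma longest_step m j g : 0 < j <= m ->
  g (0, j) + longest (m - j) (shift j g) <= longest m g.
Proof.
case: j => [//|j] /= hj; rewrite [longest m g]longestE.
exact: (@leq_bigmax _ (fun k : 'I_m => g (0, k.+1) + longest (m - k.+1) (shift k.+1 g))
          (Ordinal hj)).
Qed.

Lemma longest_shift_le m j g : j <= m -> longest (m - j) (shift j g) <= longest m g.
Proof.
case: j => [|j] hj; first by rewrite subn0 shift0.
exact: leq_trans (leq_addl _ _) (@longest_step m j.+1 g hj).
Qed.

Lemma eq_longest m g1 g2 :
  (forall a b, a < b <= m -> g1 (a, b) = g2 (a, b)) -> longest m g1 = longest m g2.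
Proof.
elim/ltn_ind: m g1 g2 => m IH g1 g2 H.
rewrite !longestE; apply: eq_bigr => k _; have km := ltn_ord k.
rewrite H; last lia.
congr (_ + _); apply: IH => [|a b ab]; first lia.
by rewrite !shift_apply H //; lia.
Qed.

Lemma longest_eq0 m g :
  (forall a b, a < b <= m -> g (a, b) = false) -> longest m g = 0.
Proof.
move=> H; rewrite (@eq_longest _ _ (fun _ => false)) => [|a b ab]; last exact: H.
elim/ltn_ind: m {H} => m IH; rewrite longestE; apply/eqP; rewrite -leqn0.
apply/bigmax_leqP => k _; rewrite add0n; have km := ltn_ord k.
by rewrite IH; lia.
Qed.

Lemma longest_before_hit m i a g : a < i <= m ->
  (forall a b, a < b < i -> g (a, b) = false) ->
  longest (m - a) (shift a g) <= (longest (m - i) (shift i g)).+1.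
Proof.
move=> + H; move Ed: (i - a) => d; elim/ltn_ind: d a Ed => d IH a Ed ha.
rewrite longestE; apply/bigmax_leqP => k _; have km := ltn_ord k.
rewrite shiftD shift_apply add0n.
have -> : m - a - k.+1 = m - (k.+1 + a) by lia.
case: (ltnP (k.+1 + a) i) => hk.
  by rewrite H ?add0n; [apply: (IH (i - (k.+1 + a))) => //; lia | lia].
have le_tail : longest (m - (k.+1 + a)) (shift (k.+1 + a) g) <= longest (m - i) (shift i g).
  have := @longest_shift_le (m - i) (k.+1 + a - i) (shift i g) ltac:(lia).
  by rewrite shiftD subnK //; have -> : m - i - (k.+1 + a - i) = m - (k.+1 + a) by lia.
by move: le_tail; case: (g _); lia.
Qed.

Lemma longest_first_hit m i g : 0 < i <= m ->
  (forall a b, a < b < i -> g (a, b) = false) -> (exists2 a, a < i & g (a, i)) ->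
  longest m g = (longest (m - i) (shift i g)).+1.
Proof.
move=> him H [a ai ga]; apply/eqP; rewrite eqn_leq; apply/andP; split.
  by have := longest_before_hit him H; rewrite subn0 shift0.
have := @longest_step (m - a) (i - a) (shift a g) ltac:(lia).
rewrite shiftD subnK ?(ltnW ai) // shift_apply add0n subnK ?(ltnW ai) // ga.
have -> : m - a - (i - a) = m - i by lia.
move=> /leq_trans; apply; apply: longest_shift_le; lia.
Qed.

Definition path_wt g (s : seq nat) : nat := \sum_(e <- zip s (behead s)) g (e.1, e.2).

Lemma path_wt_cons2 g a b s : path_wt g [:: a, b & s] = g (a, b) + path_wt g (b :: s).
Proof. by rewrite /path_wt /= big_cons. Qed.

Lemma path_wt1 g a : path_wt g [:: a] = 0.
Proof. by rewrite /path_wt big_nil. Qed.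

Lemma last_max x s y : path ltn x s -> y \in x :: s -> y <= last x s.
Proof.
elim: s x y => [|z s IH] x y /=; first by move=> _; rewrite inE => /eqP ->.
move=> /andP[xz pz]; rewrite inE => /predU1P[->|ys]; last exact: IH.
exact: leq_trans (ltnW xz) (IH z z pz (mem_head _ _)).
Qed.

Lemma path_wt_le_longest g a s : path ltn a s ->
  path_wt g (a :: s) <= longest (last a s - a) (shift a g).
Proof.
elim: s a => [|b s IH] a /=; first by rewrite path_wt1.
move=> /andP[ab pb]; rewrite path_wt_cons2.
have bl : b <= last b s by apply: last_max pb (mem_head _ _).
apply: leq_trans _ (@longest_step (last b s - a) (b - a) (shift a g) ltac:(lia)).
rewrite shiftD subnK ?(ltnW ab) // shift_apply add0n subnK ?(ltnW ab) // leq_add2l.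
have -> : last b s - a - (b - a) = last b s - b by lia.
exact: IH.
Qed.

Lemma longest_path_exists g m a : a <= m -> exists s,
  [/\ path ltn a s, last a s = m & path_wt g (a :: s) = longest (m - a) (shift a g)].
Proof.
move Ed: (m - a) => d; elim/ltn_ind: d a Ed => d IH a Ed am; subst d.
have [ltam|] := ltnP a m; last first.
  move=> ma; have -> : a = m by lia.
  by exists [::]; split; rewrite // path_wt1 subnn longestE big_ord0.
have : 0 < #|'I_(m - a)| by rewrite card_ord; lia.
case/(bigop.eq_bigmax (fun k : 'I_(m - a) =>
   shift a g (0, k.+1) + longest (m - a - k.+1) (shift k.+1 (shift a g)))) => k hk.
have km := ltn_ord k.
have [s [ps ls ws]] := IH (m - (k.+1 + a)) ltac:(lia) (k.+1 + a) erefl ltac:(lia).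
exists (k.+1 + a :: s); split => //=; first by rewrite ps andbT; lia.
rewrite longestE hk path_wt_cons2 ws shiftD shift_apply add0n.
by have -> : m - a - k.+1 = m - (k.+1 + a) by lia.
Qed.

Definition max_path_wt n g := \max_(S : {set 'I_n} | is_path S) path_wt g (path_of S).

Lemma path_of_sorted n (S : {set 'I_n}) : sorted ltn (path_of S).
Proof.
rewrite ltn_sorted_uniq_leq sort_uniq sort_sorted ?andbT; last exact: leq_total.
by rewrite map_inj_uniq ?enum_uniq //; exact: val_inj.
Qed.

Lemma path_of_mem n (S : {set 'I_n}) x : x \in path_of S -> x < n.
Proof. by rewrite /path_of mem_sort => /mapP [i _ ->]; exact: ltn_ord. Qed.

Lemma path_of_vertices n (s : seq nat) : sorted ltn s -> all (gtn n) s ->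
  path_of [set i : 'I_n | val i \in s] = s.
Proof.
move=> ss /allP sn; have := ss; rewrite ltn_sorted_uniq_leq => /andP[us ss'].
apply: (sorted_eq leq_trans anti_leq (sort_sorted leq_total _) ss').
rewrite /path_of perm_sort; apply: uniq_perm => //.
  by rewrite map_inj_uniq ?enum_uniq //; exact: val_inj.
move=> x; apply/mapP/idP => [[i]|xs]; first by rewrite mem_enum inE => ? ->.
by exists (Ordinal (sn x xs)); rewrite ?mem_enum ?inE.
Qed.

Lemma max_path_wt_longest n g : 0 < n -> max_path_wt n g = longest n.-1 g.
Proof.
move=> n0; apply/eqP; rewrite eqn_leq; apply/andP; split.
  apply/bigmax_leqP => S; rewrite /is_path.
  have := path_of_mem (S := S); have := path_of_sorted S.
  case: (path_of S) => [|x s] //= ps lt_n /andP[x0 xn].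
  have x_0 : x = 0.
    by move: x0; rewrite inE => /predU1P[-> //|/(allP (order_path_min ltn_trans ps)) /=].
  subst x.
  have -> : n.-1 = last 0 s.
    by move: (last_max ps xn) (lt_n _ (mem_last 0 s)); set l := last 0 s; lia.
  by have := path_wt_le_longest g ps; rewrite subn0 shift0.
have [s [ps ls ws]] := longest_path_exists g (leq0n n.-1).
rewrite subn0 shift0 in ws; rewrite -ws.
have sn : all (gtn n) (0 :: s) by apply/allP => x /(last_max ps) /=; lia.
have {}ps : sorted ltn (0 :: s) by [].
rewrite -(path_of_vertices ps sn); apply: leq_bigmax_cond.
by rewrite /is_path path_of_vertices // mem_head /= -ls mem_last.
Qed.

End LongestPath.

Fixpoint edges n : seq (nat * nat) :=
  if n is m.+1 then edges m ++ [seq (a, m) | a <- iota 0 m] else [::].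

Definition below j (e : nat * nat) := e.1 < e.2 < j.

Definition above i (e : nat * nat) := (e.1 < e.2) && (i <= e.1).

Lemma mem_edges n e : (e \in edges n) = below n e.
Proof.
case: e => a b; rewrite /below /=; elim: n => [|n IH] /=; first by rewrite andbF.
rewrite mem_cat IH; apply/orP/andP => [[/andP[ab bn]|/mapP[c]]|[ab]].
- by split=> //; exact: ltnW.
- by rewrite mem_iota add0n => /andP[_ cn] [-> ->].
rewrite ltnS leq_eqVlt => /predU1P[eb|bn]; last by left; rewrite ab.
by right; apply/mapP; exists a; rewrite ?mem_iota ?eb //=; lia.
Qed.

Lemma edges_uniq n : uniq (edges n).
Proof.
elim: n => [|n IH] //=; rewrite cat_uniq IH map_inj_uniq ?iota_uniq; last by move=> x y [].
by rewrite andbT; apply/hasPn => e /mapP[a _ ->]; rewrite mem_edges /below ltnn andbF.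
Qed.

Lemma size_edges n : size (edges n) = 'C(n, 2).
Proof. by elim: n => [|n IH] //=; rewrite size_cat IH size_map size_iota binS bin1. Qed.

Lemma filter_edges_below j n : j <= n -> perm_eq (filter (below j) (edges n)) (edges j).
Proof.
move=> jn; apply: uniq_perm; rewrite ?filter_uniq ?edges_uniq // => -[a b].
by rewrite mem_filter !mem_edges /below /=; apply/andP/idP => [[]//|h]; split=> //; lia.
Qed.

Lemma filter_edges_above i n : i <= n ->
  perm_eq (filter (above i) (edges n)) (map (shift_pair i) (edges (n - i))).
Proof.
move=> iN; apply: uniq_perm; rewrite ?filter_uniq ?edges_uniq //.
  by rewrite map_inj_uniq ?edges_uniq // => -[a b] [c d] [/addIn -> /addIn ->].
move=> [a b]; rewrite mem_filter mem_edges /above /below /=.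
apply/idP/mapP => [/andP[/andP[ab ia] /andP[_ bn]]|[[c d]]].
  by exists (a - i, b - i); rewrite ?mem_edges /below /shift_pair /=; [lia | congr pair; lia].
by rewrite mem_edges /below /shift_pair /= => cd [-> ->]; lia.
Qed.

Section FirstHit.

Implicit Types (g : nat * nat -> bool).

Definition zero_below j g := all (fun e => ~~ g e) (edges j).

Definition first_hit i g := zero_below i g && ~~ zero_below i.+1 g.

Lemma zero_belowP j g : reflect (forall a b, a < b < j -> g (a, b) = false) (zero_below j g).
Proof.
apply: (iffP allP) => [z a b abj|z [a b]]; last by rewrite mem_edges => /z ->.
by apply/negbTE/z; rewrite mem_edges.
Qed.

Lemma zero_below_le i j g : i <= j -> zero_below j g -> zero_below i g.
Proof. by move=> ij /zero_belowP z; apply/zero_belowP => a b abi; apply: z; lia. Qed.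

Lemma eq_zero_below j g1 g2 : {in below j, g1 =1 g2} -> zero_below j g1 = zero_below j g2.
Proof. by move=> e12; apply: eq_in_all => e; rewrite mem_edges => /e12 ->. Qed.

Lemma first_hitP i g : first_hit i g ->
  (forall a b, a < b < i -> g (a, b) = false) /\ exists2 a, a < i & g (a, i).
Proof.
case/andP=> /zero_belowP z /allPn[[a b]]; rewrite mem_edges /below /= => /andP[ab].
rewrite ltnS leq_eqVlt => /predU1P[eb | bi] /negPn gab; first by subst b; split=> //; exists a.
by rewrite z ?ab in gab.
Qed.

Lemma first_hit_unique i j g : first_hit i g -> first_hit j g -> i = j.
Proof.
move=> /andP[zi nzi] /andP[zj nzj]; have [ij|ji|//] := ltngtP i j.
  by rewrite (zero_below_le ij zj) in nzi.
by rewrite (zero_below_le ji zi) in nzj.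
Qed.

Lemma exists_first_hit n g : ~~ zero_below n g -> exists2 i, 0 < i < n & first_hit i g.
Proof.
move=> nzn; have [j nzj jmin] := ex_minnP (ex_intro (fun j => ~~ zero_below j g) n nzn).
have j_gt1 : 1 < j by case: j nzj {jmin} => [|[|j]].
exists j.-1; first by have := jmin n nzn; lia.
rewrite /first_hit prednK ?nzj ?andbT; last lia.
by apply: contraT => /jmin; lia.
Qed.

Lemma max_path_wt_zero n g : 0 < n -> zero_below n g -> max_path_wt n g = 0.
Proof.
move=> n0 /zero_belowP z; rewrite max_path_wt_longest // longest_eq0 // => a b abn.
by apply: z; rewrite -(prednK n0) ltnS.
Qed.

Lemma max_path_wt_first_hit n i g : i < n -> first_hit i g ->
  max_path_wt n g = (max_path_wt (n - i) (shift i g)).+1.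
Proof.
move=> iN /first_hitP[z [a ai ga]].
rewrite !max_path_wt_longest ?subn_gt0 //; last lia.
have -> : (n - i).-1 = n.-1 - i by lia.
by apply: longest_first_hit => //; [lia | exists a].
Qed.

End FirstHit.

Local Open Scope ring_scope.

Lemma exp_max_path_wt (T : nzSemiRingType) (t : T) n (g : nat * nat -> bool) :
  (0 < n)%N ->
  t ^+ max_path_wt n g =
  \sum_(1 <= i < n) t * ((first_hit i g)%:R * t ^+ max_path_wt (n - i) (shift i g))
  + (zero_below n g)%:R.
Proof.
move=> n0; have [z|nz] := boolP (zero_below n g).
  rewrite max_path_wt_zero // big1_seq ?add0r // => i /andP[_].
  rewrite mem_index_iota => /andP[_ iN].
  by rewrite /first_hit (zero_below_le iN z) andbF mul0r mulr0.
have [i /andP[i0 iN] hit] := exists_first_hit nz.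
rewrite addr0 (bigD1_seq i) ?iota_uniq ?mem_index_iota ?i0 //= hit mul1r.
rewrite (max_path_wt_first_hit iN hit) exprS big1_seq ?addr0 // => j /andP[ji _].
case hitj : (first_hit j g); last by rewrite mul0r mulr0.
by rewrite (first_hit_unique hit hitj) eqxx in ji.
Qed.

Section Expectation.

Variables (T : comNzRingType) (p : T) (K : eqType).
Implicit Types (L : seq K) (F : (K -> bool) -> T) (g : K -> bool) (D : pred K).

Definition upd g k b : K -> bool := fun k' => if k' == k then b else g k'.

(* The expectation of [F] when the coordinates in [L] are resampled as independent
   Bernoulli(p) variables and all other coordinates are read off [g]. *)
Fixpoint expect L F g : T :=
  if L is e :: L' then
    p * expect L' F (upd g e true) + (1 - p) * expect L' F (upd g e false)
  else F g.

Definition depends_on F D := forall g1 g2, {in D, g1 =1 g2} -> F g1 = F g2.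

Lemma eq_expect_off L F1 F2 g :
  (forall g', (forall k, k \notin L -> g' k = g k) -> F1 g' = F2 g') ->
  expect L F1 g = expect L F2 g.
Proof.
elim: L g => [|e L IH] g H /=; first exact: H.
congr (_ * _ + _ * _); apply: IH => g' g'E; apply: H => k.
  by rewrite inE negb_or => /andP[ke kL]; rewrite g'E // /upd (negbTE ke).
by rewrite inE negb_or => /andP[ke kL]; rewrite g'E // /upd (negbTE ke).
Qed.

Lemma eq_expect L F1 F2 g : F1 =1 F2 -> expect L F1 g = expect L F2 g.
Proof. by move=> eF; apply: eq_expect_off => g' _; exact: eF. Qed.

Lemma expect_cst L c g : expect L (fun _ => c) g = c.
Proof. by elim: L g => [|e L IH] g //=; rewrite !IH -mulrDl subrKC mul1r. Qed.

Lemma expectD L F1 F2 g :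
  expect L (fun g => F1 g + F2 g) g = expect L F1 g + expect L F2 g.
Proof. by elim: L g => [|e L IH] g //=; rewrite !IH; ring. Qed.

Lemma expectB L F1 F2 g :
  expect L (fun g => F1 g - F2 g) g = expect L F1 g - expect L F2 g.
Proof. by elim: L g => [|e L IH] g //=; rewrite !IH; ring. Qed.

Lemma expectMl L c F g : expect L (fun g => c * F g) g = c * expect L F g.
Proof. by elim: L g => [|e L IH] g //=; rewrite !IH; ring. Qed.

Lemma expect_sum (I : Type) (r : seq I) (F : I -> (K -> bool) -> T) L g :
  expect L (fun g => \sum_(i <- r) F i g) g = \sum_(i <- r) expect L (F i) g.
Proof.
by elim: L g => [|e L IH] g //=; rewrite !IH !mulr_sumr -big_split.
Qed.

Lemma expect_depends L F D g1 g2 : depends_on F D ->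
  (forall k, D k -> k \notin L -> g1 k = g2 k) -> expect L F g1 = expect L F g2.
Proof.
elim: L g1 g2 => [|e L IH] g1 g2 dF H /=; first by apply: dF => k /H; apply.
congr (_ * _ + _ * _); apply: IH => // k Dk kL; rewrite /upd.
  by case: eqP => // /eqP ke; apply: H; rewrite // inE negb_or ke.
by case: eqP => // /eqP ke; apply: H; rewrite // inE negb_or ke.
Qed.

Lemma expect_upd L F D g e b : depends_on F D -> ~~ D e ->
  expect L F (upd g e b) = expect L F g.
Proof.
move=> dF De; apply: expect_depends dF _ => k Dk _; rewrite /upd.
by case: eqP => // ke; rewrite -ke Dk in De.
Qed.

Lemma expect_filter L F D g : depends_on F D -> expect L F g = expect (filter D L) F g.
Proof.
move=> dF; elim: L g => [|e L IH] g //=.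
case De : (D e) => /=; first by rewrite !IH.
by rewrite !(expect_upd _ _ _ dF) ?De // IH -mulrDl subrKC mul1r.
Qed.

Lemma upd_swap g a b x y : a != b -> upd (upd g a x) b y = upd (upd g b y) a x.
Proof.
move=> ab; apply: functional_extensionality => k; rewrite /upd.
by case: eqP => // ->; rewrite eq_sym (negbTE ab).
Qed.

Lemma expect_swap a b L F g : expect [:: a, b & L] F g = expect [:: b, a & L] F g.
Proof. by have [->//|ab] := eqVneq a b; rewrite /= !(upd_swap _ _ _ ab); ring. Qed.

Lemma expect_perm L1 L2 F g : perm_eq L1 L2 -> expect L1 F g = expect L2 F g.
Proof.
have expect_cat_cons s a t g' : expect (s ++ a :: t) F g' = expect (a :: s ++ t) F g'.
  by elim: s g' => [|x s IH] g' //; rewrite expect_swap /= !IH.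
elim: L1 L2 g => [|a L1 IH] L2 g eL.
  by move: eL; rewrite perm_sym => /perm_nilP ->.
have aL2 : a \in L2 by rewrite -(perm_mem eL) mem_head.
case/splitPr: aL2 eL => s t eL.
have eL1 : perm_eq L1 (s ++ t).
  by rewrite -(perm_cons a); apply: perm_trans eL _; rewrite -[a :: t]cat1s perm_catCA.
by rewrite expect_cat_cons /= !(IH _ _ eL1).
Qed.

Lemma expect_restrict L L' F D g : depends_on F D -> perm_eq (filter D L) L' ->
  expect L F g = expect L' F g.
Proof. by move=> dF eL; rewrite (expect_filter _ _ dF); exact: expect_perm. Qed.

Lemma expectM L c F D1 D2 g : depends_on c D1 -> depends_on F D2 ->
  (forall k, D1 k -> ~~ D2 k) ->
  expect L (fun g => c g * F g) g = expect L c g * expect L F g.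
Proof.
move=> dc dF D12; elim: L g => [|e L IH] g //=; rewrite !IH.
case D2e : (D2 e).
  have D1e : ~~ D1 e by apply: contraTN D2e; exact: D12.
  by rewrite !(expect_upd _ _ _ dc D1e); ring.
by rewrite !(expect_upd _ _ _ dF (negbT D2e)); ring.
Qed.

Lemma expect_all_false L g : uniq L ->
  expect L (fun g => (all (fun e => ~~ g e) L)%:R) g = (1 - p) ^+ size L.
Proof.
elim: L g => [|e L IH] g /=; first by rewrite expr0.
case/andP=> eL uL.
rewrite (eq_expect_off (F2 := fun _ => 0)) => [|g' g'E]; last by rewrite g'E // /upd eqxx.
rewrite expect_cst mulr0 add0r exprS -(IH (upd g e false) uL).
by congr (_ * _); apply: eq_expect_off => g' g'E; rewrite g'E // /upd eqxx.
Qed.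

End Expectation.

Lemma expect_comp (T : comNzRingType) (p : T) (K K' : eqType) (h : K' -> K) (L : seq K')
    (F : (K' -> bool) -> T) (g : K -> bool) : injective h ->
  expect p (map h L) (fun g => F (g \o h)) g = expect p L F (g \o h).
Proof.
move=> hinj; elim: L g => [|e L IH] g //=; rewrite !IH.
have upd_comp b : upd g (h e) b \o h = upd (g \o h) e b.
  by apply: functional_extensionality => k; rewrite /upd /= (inj_eq hinj).
by rewrite !upd_comp.
Qed.

Section FinfunSums.

Variables (T : comNzRingType) (p : T) (I : finType) (K : eqType) (h : I -> K).
Hypothesis h_inj : injective h.

Definition pushb (f : {ffun I -> bool}) : K -> bool := fun k => [exists i, (h i == k) && f i].

Definition fix_off (s : seq I) (f0 f : {ffun I -> bool}) :=
  [forall i, (i \notin s) ==> (f i == f0 i)].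

Definition ffun_upd (f : {ffun I -> bool}) a b := [ffun i => if i == a then b else f i].

Lemma pushb_upd f a b : pushb (ffun_upd f a b) = upd (pushb f) (h a) b.
Proof.
apply: functional_extensionality => k; rewrite /pushb /upd.
case: (eqVneq k (h a)) => [->|hak].
  apply/existsP/idP => [[i /andP[/eqP hia]]|->]; first by rewrite (h_inj hia) ffunE eqxx.
  by exists a; rewrite eqxx ffunE eqxx.
apply: eq_existsb => i; rewrite ffunE; case: (eqVneq i a) => [->|//].
by move: hak; rewrite eq_sym => /negbTE ->.
Qed.

Lemma fix_off_cons a s f0 f b : a \notin s ->
  (fix_off (a :: s) f0 f && (f a == b)) = fix_off s (ffun_upd f0 a b) f.
Proof.
move=> aS; apply/andP/forallP => [[/forallP f0E /eqP fa] i|fE].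
  apply/implyP => iS; rewrite ffunE; case: (eqVneq i a) => [->|ia]; first by rewrite fa.
  by apply: (implyP (f0E i)); rewrite inE negb_or ia.
split.
  apply/forallP => i; apply/implyP; rewrite inE negb_or => /andP[ia iS].
  by have := implyP (fE i) iS; rewrite ffunE (negbTE ia).
by have := implyP (fE a) aS; rewrite ffunE eqxx.
Qed.

Lemma sum_ffun_expect (F : (K -> bool) -> T) (s : seq I) f0 : uniq s ->
  \sum_(f | fix_off s f0 f) (\prod_(i <- s) (if f i then p else 1 - p)) * F (pushb f)
  = expect p (map h s) F (pushb f0).
Proof.
elim: s f0 => [|a s IH] f0 /=.
  move=> _; rewrite (big_pred1 f0) ?big_nil ?mul1r // => f.
  by apply/forallP/eqP => [f0E|-> i]; [apply/ffunP => i; apply/eqP/f0E | rewrite eqxx].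
case/andP=> aS uS; rewrite (bigID (fun f : {ffun I -> bool} => f a)) /=.
have sum_at b : \sum_(f | fix_off (a :: s) f0 f && (f a == b))
    (\prod_(i <- a :: s) (if f i then p else 1 - p)) * F (pushb f)
  = (if b then p else 1 - p) * expect p (map h s) F (upd (pushb f0) (h a) b).
  rewrite -pushb_upd -IH // mulr_sumr; apply: eq_big => [f|f /andP[_ /eqP fa]].
    exact: fix_off_cons.
  by rewrite big_cons fa mulrA.
rewrite -(sum_at true) -(sum_at false).
by congr (_ + _); apply: eq_bigl => f; case: (f a); rewrite ?andbT ?andbF.
Qed.

End FinfunSums.

Section PathPgf.

Variables (T : comNzRingType) (p t : T).

Definition path_pgf n := expect p (edges n) (fun g => t ^+ max_path_wt n g) (fun _ => false).

Lemma depends_zero_below j : depends_on (fun g => (zero_below j g)%:R : T) (below j).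
Proof. by move=> g1 g2 e12; rewrite (eq_zero_below e12). Qed.

Lemma depends_first_hit i : depends_on (fun g => (first_hit i g)%:R : T) (below i.+1).
Proof.
move=> g1 g2 e12; rewrite /first_hit (eq_zero_below e12) (@eq_zero_below i g1 g2) //.
by move=> e /andP[ab bi]; apply: e12; rewrite unfold_in /below ab ltnS ltnW.
Qed.

Lemma depends_shift n i : (i < n)%N ->
  depends_on (fun g => t ^+ max_path_wt (n - i) (shift i g)) (above i).
Proof.
move=> iN g1 g2 e12; rewrite !max_path_wt_longest ?subn_gt0 //; congr (_ ^+ _).
by apply: eq_longest => a b ab; apply: e12; rewrite unfold_in /above /=; lia.
Qed.

Lemma below_above_disjoint i e : below i.+1 e -> ~~ above i e.
Proof. by rewrite /below /above; lia. Qed.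

Lemma first_hit_natr i g :
  (first_hit i g)%:R = (zero_below i g)%:R - (zero_below i.+1 g)%:R :> T.
Proof.
rewrite /first_hit; have [z|_] := boolP (zero_below i.+1 g); last by rewrite andbT subr0.
by rewrite (zero_below_le (leqnSn i) z) subrr.
Qed.

Lemma expect_zero_below j n g0 : (j <= n)%N ->
  expect p (edges n) (fun g => (zero_below j g)%:R) g0 = (1 - p) ^+ 'C(j, 2).
Proof.
move=> jn; rewrite (expect_restrict _ _ (@depends_zero_below j) (filter_edges_below jn)).
by rewrite -size_edges; exact: expect_all_false (edges_uniq j).
Qed.

Lemma expect_first_hit i n g0 : (i < n)%N ->
  expect p (edges n) (fun g => (first_hit i g)%:R) g0
  = (1 - p) ^+ 'C(i, 2) - (1 - p) ^+ 'C(i.+1, 2).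
Proof.
move=> iN; rewrite (eq_expect _ _ _ (first_hit_natr i)) expectB.
by rewrite !expect_zero_below // ltnW.
Qed.

Lemma expect_tail i n : (i < n)%N ->
  expect p (edges n) (fun g => t ^+ max_path_wt (n - i) (shift i g)) (fun _ => false)
  = path_pgf (n - i).
Proof.
move=> iN; rewrite (expect_restrict _ _ (depends_shift iN) (filter_edges_above (ltnW iN))).
by apply: expect_comp => -[a b] [c d] [/addIn -> /addIn ->].
Qed.

Lemma path_pgf_rec n : (0 < n)%N ->
  path_pgf n = \sum_(1 <= i < n)
      t * ((1 - p) ^+ 'C(i, 2) - (1 - p) ^+ 'C(i.+1, 2)) * path_pgf (n - i)
    + (1 - p) ^+ 'C(n, 2).
Proof.
move=> n0; rewrite /path_pgf (eq_expect _ _ _ (fun g => exp_max_path_wt t g n0)).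
rewrite expectD expect_sum expect_zero_below //; congr (_ + _).
apply: eq_big_nat => i /andP[_ iN].
rewrite expectMl (expectM _ _ _ (@depends_first_hit i) (depends_shift iN)).
  by rewrite expect_first_hit // expect_tail // mulrA.
exact: below_above_disjoint.
Qed.

End PathPgf.

Definition edge_ends n (e : edge n) : nat * nat := (val (val e).1, val (val e).2).

Lemma edge_ends_inj n : injective (@edge_ends n).
Proof.
move=> [[x1 y1] e1] [[x2 y2] e2] [/val_inj ex /val_inj ey].
by apply: val_inj; rewrite /= ex ey.
Qed.

Lemma edge_ends_perm n : perm_eq (map (@edge_ends n) (index_enum (edge n))) (edges n).
Proof.
apply: uniq_perm; rewrite ?edges_uniq ?map_inj_uniq ?index_enum_uniq //.
  exact: edge_ends_inj.
move=> [a b]; rewrite mem_edges /below /=; apply/mapP/andP => [[[[i j] ij] _ [-> ->]]|[ab bn]].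
  by split=> //; exact: ltn_ord.
by exists (exist _ (Ordinal (ltn_trans ab bn), Ordinal bn) ab); rewrite ?mem_index_enum.
Qed.

Lemma EY_path_pgf (R : realFieldType) (p : R) n : EY p n = path_pgf p%:P 'X n.
Proof.
have := sum_ffun_expect p%:P (edge_ends_inj (n := n)) (fun g => 'X ^+ max_path_wt n g)
  [ffun => false] (index_enum_uniq (edge n)).
have -> : pushb (@edge_ends n) [ffun => false] = fun _ => false.
  by apply: functional_extensionality => k; apply/existsP => -[e]; rewrite ffunE andbF.
rewrite /path_pgf (expect_perm _ _ _ (edge_ends_perm n)) => <-.
rewrite /EY; symmetry; rewrite (eq_bigl predT) => [|f]; last first.
  by apply/forallP => e; rewrite mem_index_enum.
(* [Xmax w] is convertible to [max_path_wt n (pushb (@edge_ends n) w)]. *)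
apply: eq_bigr => w _; rewrite /prob rmorph_prod; congr (_ * _).
by apply: eq_bigr => e _; case: (w e); rewrite ?rmorphB ?rmorph1.
Qed.

Section PowerSeries.

Variable T : comUnitRingType.
Implicit Types (f w b c : fps T) (P Q : {poly T}).

Lemma size_inv_coefs f m : size (inv_coefs f m) = m.+1.
Proof. by elim: m => [|m IH] //=; rewrite size_rcons IH. Qed.

Lemma nth_inv_coefs f m j : (j <= m)%N -> nth 0 (inv_coefs f m) j = fps_inv f j.
Proof.
elim: m => [|m IH]; first by rewrite leqn0 => /eqP ->.
rewrite leq_eqVlt => /predU1P[-> //|jm].
by rewrite /= nth_rcons size_inv_coefs jm IH.
Qed.

Lemma fps_invS f m :
  fps_inv f m.+1 = - (f 0%N)^-1 * \sum_(k < m.+1) f k.+1 * fps_inv f (m - k)%N.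
Proof.
rewrite {1}/fps_inv /= nth_rcons size_inv_coefs ltnn eqxx.
by congr (_ * _); apply: eq_bigr => k _; rewrite nth_inv_coefs // leq_subr.
Qed.

Lemma fps_mul_inv f m : f 0%N = 1 -> fps_mul f (fps_inv f) m = (m == 0%N)%:R.
Proof.
move=> f0; rewrite /fps_mul; case: m => [|m].
  by rewrite big_ord1 f0 /fps_inv /= f0 invr1 mul1r.
rewrite big_ord_recl /= f0 mul1r fps_invS f0 invr1 mulN1r addrC.
by apply/eqP; rewrite subr_eq0; apply/eqP/eq_bigr => k _; rewrite subSS.
Qed.

Definition fps_trunc (a : fps T) N : {poly T} := \poly_(j < N) a j.

Lemma fps_mul_trunc a b N m : (m < N)%N ->
  fps_mul a b m = (fps_trunc a N * fps_trunc b N)`_m.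
Proof.
move=> mN; rewrite coefM; apply: eq_bigr => j _; have := ltn_ord j; rewrite ltnS => jm.
by rewrite !coef_poly (leq_ltn_trans jm mN) (leq_ltn_trans (leq_subr _ _) mN).
Qed.

Lemma coefMl_lt P P' Q N : (forall m, (m < N)%N -> P`_m = P'`_m) ->
  forall m, (m < N)%N -> (P * Q)`_m = (P' * Q)`_m.
Proof.
move=> PP' m mN; rewrite !coefM; apply: eq_bigr => j _; have := ltn_ord j.
by rewrite ltnS => jm; rewrite PP' // (leq_ltn_trans jm mN).
Qed.

Lemma fps_mul_inv_eq f w b : f 0%N = 1 -> fps_mul f w =1 b -> w =1 fps_mul b (fps_inv f).
Proof.
(* Truncation below degree k+1 transports the associativity of polynomial products. *)
move=> f0 fw k; set N := k.+1; have kN : (k < N)%N by [].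
have fg : forall m, (m < N)%N ->
    (fps_trunc f N * fps_trunc (fps_inv f) N)`_m = (1 : {poly T})`_m.
  by move=> m mN; rewrite -fps_mul_trunc // fps_mul_inv // coef1.
have fwb : forall m, (m < N)%N -> (fps_trunc f N * fps_trunc w N)`_m = (fps_trunc b N)`_m.
  by move=> m mN; rewrite -fps_mul_trunc // fw coef_poly mN.
rewrite (fps_mul_trunc _ _ kN) -(coefMl_lt (fps_trunc (fps_inv f) N) fwb kN).
by rewrite mulrAC (coefMl_lt (fps_trunc w N) fg kN) mul1r coef_poly kN.
Qed.

Lemma fps_mul_one_sub c w b : c 0%N = 0 -> w 0%N = 0 ->
  (forall n, (0 < n)%N -> w n = \sum_(1 <= i < n) c i * w (n - i)%N + b n.-1) ->
  fps_mul (fps_sub fps_one c) w =1 fps_xmul b.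
Proof.
move=> c0 w0 wrec [|n]; first by rewrite /fps_mul big_ord1 w0 mulr0.
have tail : \sum_(i < n.+1) c i.+1 * w (n - i)%N = \sum_(1 <= i < n.+1) c i * w (n.+1 - i)%N.
  rewrite big_ord_recr /= subnn w0 mulr0 addr0 big_add1 big_mkord.
  by apply: eq_bigr => i _; rewrite subSS.
rewrite /fps_mul big_ord_recl /fps_sub /fps_one /= c0 subr0 mul1r subn0 wrec //= -tail.
rewrite addrAC -[RHS]add0r; congr (_ + _); rewrite -big_split big1 // => i _.
by rewrite /bump /= add1n subSS sub0r mulNr addrN.
Qed.

End PowerSeries.

Section Series.

Variables (R : realFieldType) (p : R).

Lemma EY_rec n : (1 <= n)%N ->
  EY p n = \sum_(1 <= i < n)
      'X * ((1 - p) ^+ 'C(i, 2) - (1 - p) ^+ 'C(i.+1, 2))%:P * EY p (n - i)%N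
    + ((1 - p) ^+ 'C(n, 2))%:P.
Proof.
move=> n0; rewrite EY_path_pgf path_pgf_rec //.
congr (_ + _); last by rewrite rmorphXn rmorphB rmorph1.
by apply: eq_bigr => i _; rewrite EY_path_pgf rmorphB !rmorphXn rmorphB rmorph1.
Qed.

Definition EY0 k := if k == 0%N then 0 else EY p k.

Lemma EY0_series :
  EY0 =1 fps_mul (fps_xmul (Bp p))
           (fps_inv (fps_sub fps_one (fps_scale 'X (fps_sub (Ap p) (Bp p))))).
Proof.
apply: fps_mul_inv_eq.
  by rewrite /fps_sub /fps_one /fps_scale /Ap /Bp /= subrr mulr0 subr0.
apply: fps_mul_one_sub => [|//|n n0].
  by rewrite /fps_scale /fps_sub /Ap /Bp /= subrr mulr0.
case: n n0 => // n _; rewrite /EY0 /= EY_rec // /Bp; congr (_ + _).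
apply: eq_big_nat => i /andP[i1 iN].
by rewrite subn_eq0 leqNgt iN /fps_scale /fps_sub /Ap /Bp -polyCB.
Qed.

End Series.

Theorem theorem3 (R : realFieldType) (p : R) (hp0 : 0 < p) (hp1 : p < 1) :
  (forall n : nat, (1 <= n)%N ->
     EY p n =
       \sum_(1 <= i < n)
          'X * ((1 - p) ^+ 'C(i, 2) - (1 - p) ^+ 'C(i.+1, 2))%:P * EY p (n - i)%N
       + ((1 - p) ^+ 'C(n, 2))%:P)
  /\
  (forall k : nat,
     Zser p k =
       fps_add fps_one
         (fps_mul (fps_xmul (Bp p))
                  (fps_inv (fps_sub fps_one
                              (fps_scale 'X (fps_sub (Ap p) (Bp p)))))) k).
Proof.
split=> [|k]; first exact: EY_rec.
by rewrite /fps_add -EY0_series /Zser /fps_one /EY0; case: k => [|k] /=; rewrite ?addr0 ?add0r.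
Qed.
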